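(* Let $\mathcal{L}$ be a subspace of $\ell^2(G)$ containing $\mathcal{K}(G)$, and let $\|\cdot\|'$ be a norm on $\mathcal{L}$ such that $\|\,|f|\,\|' = \|f\|'$ for all $f\in\mathcal{K}(G)$. If $G$ (i.e. the pair $(G,1)$ with the trivial cocycle) has the $\mathcal{L}$-decay property with respect to $\|\cdot\|'$, then $(G,\sigma)$ has the $\mathcal{L}$-decay property with respect to $\|\cdot\|'$ for every normalized 2-cocycle $\sigma$.
   Context: $G$ is a discrete group with identity $e$, and $\sigma : G\times G \to \mathbb{T}$ is a normalized 2-cocycle, i.e. $\sigma(g,h)\sigma(gh,k)=\sigma(h,k)\sigma(g,hk)$ and $\sigma(g,e)=\sigma(e,g)=1$. $\Lambda_\sigma(g)$ is the unitary on $\ell^2(G)$ given by $(\Lambda_\sigma(g)\xi)(h)=\sigma(g,g^{-1}h)\xi(g^{-1}h)$; $\lambda=\Lambda_1$. $C^*_r(G,\sigma)$ is the operator-norm closed $*$-subalgebra of $B(\ell^2(G))$ generated by $\Lambda_\sigma(G)$. $\mathcal{K}(G)$ is the space of finitely supported complex functions on $G$; for $f\in\mathcal{K}(G)$, $\pi_\sigma(f)=\sum_{g}f(g)\Lambda_\sigma(g)$. For a finite $F\subseteq G$ and a function $\xi$, $\xi_F=\xi\chi_F$. If $\mathcal{L}\supseteq\mathcal{K}(G)$ is a subspace of $\ell^2(G)$ with a norm $\|\cdot\|'$, an element $\xi\in\mathcal{L}$ tends to $0$ at infinity w.r.t. $\|\cdot\|'$ if for every $\varepsilon>0$ there is a finite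 $F_0\subseteq G$ with $\|\xi_F\|'<\varepsilon$ for all finite $F$ disjoint from $F_0$. $(G,\sigma)$ has the $\mathcal{L}$-decay property w.r.t. $\|\cdot\|'$ if (i) every $\xi\in\mathcal{L}$ tends to $0$ at infinity w.r.t. $\|\cdot\|'$, and (ii) the map $f\mapsto\pi_\sigma(f)$ from $(\mathcal{K}(G),\|\cdot\|')$ to $(C^*_r(G,\sigma),\text{operator norm})$ is bounded. *)

From HB Require Import structures.
From mathcomp Require Import all_boot all_order all_algebra.
From mathcomp Require Import all_classical all_reals.
From mathcomp Require Import esum.
From mathcomp Require Import complex.
Set Implicit Arguments. Unset Strict Implicit. Unset Printing Implicit Defensive.
Import Order.TTheory GRing.Theory Num.Theory.
Local Open Scope classical_set_scope.
Local Open Scope ring_scope.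

Definition cabs (R : realType) (z : R[i]) : R := ComplexField.Normc.normc z.

Definition absfun (R : realType) (G : Type) (f : G -> R[i]) : G -> R[i] :=
  fun g => ((cabs (f g))%:C)%C.

Definition is_group (G : Type) (mul : G -> G -> G) (inv : G -> G) (e : G) : Prop :=
  [/\ forall x y z, mul x (mul y z) = mul (mul x y) z,
      forall x, mul e x = x, forall x, mul x e = x,
      forall x, mul (inv x) x = e & forall x, mul x (inv x) = e].

Definition normalized_2cocycle (R : realType) (G : Type) (mul : G -> G -> G) (e : G)
    (sigma : G -> G -> R[i]) : Prop :=
  [/\ forall g h, cabs (sigma g h) = 1,
      forall g h k, sigma g h * sigma (mul g h) k = sigma h k * sigma g (mul h k),
      forall g, sigma g e = 1 & forall g, sigma e g = 1].

Definition finsupp (R : realType) (G : Type) (f : G -> R[i]) : Prop :=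
  finite_set [set g | f g != 0].

Definition l2sq (R : realType) (G : Type) (xi : G -> R[i]) : \bar R :=
  esum (T := {classic G}) setT (fun g => ((cabs (xi g)) ^+ 2)%:E).

Definition in_l2 (R : realType) (G : Type) (xi : G -> R[i]) : Prop :=
  (l2sq xi < +oo)%E.

Definition l2norm (R : realType) (G : Type) (xi : G -> R[i]) : R :=
  Num.sqrt (fine (l2sq xi)).

Definition restr (R : realType) (G : Type) (F : set G) (xi : G -> R[i]) : G -> R[i] :=
  fun g => if g \in F then xi g else 0.

Definition pi_sigma (R : realType) (G : Type) (mul : G -> G -> G) (inv : G -> G)
    (sigma : G -> G -> R[i]) (f : G -> R[i]) (xi : G -> R[i]) : G -> R[i] :=
  fun h => \sum_(g \in (setT : set {classic G}))
             f g * sigma g (mul (inv g) h) * xi (mul (inv g) h).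

Definition tends_to_zero_at_infinity (R : realType) (G : Type)
    (nrm : (G -> R[i]) -> R) (xi : G -> R[i]) : Prop :=
  forall eps : R, 0 < eps ->
    exists F0 : set G, finite_set F0 /\
      forall F : set G, finite_set F -> F `&` F0 = set0 -> nrm (restr F xi) < eps.

(* (G, sigma) has the L-decay property w.r.t. nrm.
   (ii) boundedness of f |-> pi_sigma(f) from (K(G), nrm) to the operator norm on
   B(l^2(G)), written out: ||pi_sigma(f) xi||_2 <= C ||f||' ||xi||_2. *)
Definition decay_property (R : realType) (G : Type) (mul : G -> G -> G) (inv : G -> G)
    (sigma : G -> G -> R[i]) (L : set (G -> R[i])) (nrm : (G -> R[i]) -> R) : Prop :=
  (forall xi, L xi -> tends_to_zero_at_infinity nrm xi) /\
  exists C : R, forall f, finsupp f -> forall xi, in_l2 xi ->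
    l2norm (pi_sigma mul inv sigma f xi) <= C * nrm f * l2norm xi.

Definition l2_subspace_containing_K (R : realType) (G : Type) (L : set (G -> R[i])) : Prop :=
  [/\ forall xi, L xi -> in_l2 xi,
      L (fun _ => 0),
      forall xi eta, L xi -> L eta -> L (fun g => xi g + eta g),
      forall (a : R[i]) xi, L xi -> L (fun g => a * xi g)
    & forall f, finsupp f -> L f].

Definition is_norm_on (R : realType) (G : Type) (L : set (G -> R[i]))
    (nrm : (G -> R[i]) -> R) : Prop :=
  [/\ forall xi, L xi -> 0 <= nrm xi,
      forall xi, L xi -> nrm xi = 0 -> xi = (fun _ => 0),
      forall (a : R[i]) xi, L xi -> nrm (fun g => a * xi g) = cabs a * nrm xi
    & forall xi eta, L xi -> L eta -> nrm (fun g => xi g + eta g) <= nrm xi + nrm eta].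

From HB Require Import structures.
From mathcomp Require Import all_boot all_order all_algebra.
From mathcomp Require Import all_classical all_reals.
From mathcomp Require Import esum complex.
From mathcomp Require Import lra.
Import Order.TTheory GRing.Theory Num.Theory.
Local Open Scope classical_set_scope.
Local Open Scope ring_scope.
Set Implicit Arguments. Unset Strict Implicit. Unset Printing Implicit Defensive.

(* Since |sigma| = 1, the triangle inequality gives the pointwise domination
   |pi_sigma(f) xi| <= pi_1(|f|) |xi|.  The l^2 norm is monotone and taking
   moduli changes neither ||f||' nor ||xi||_2, so the operator bound for the
   trivial cocycle holds for sigma with the same constant; the decay condition
   at infinity does not involve sigma at all. *)

Section ComplexModulus.
Variable R : realType.
Implicit Types z : R[i].

Lemma cabs_ge0 z : 0 <= cabs z.
Proof. by case: z => a b; rewrite /cabs /= sqrtr_ge0. Qed.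

Lemma cabs0 : cabs (0 : R[i]) = 0.
Proof. exact: ComplexField.Normc.normc0. Qed.

Lemma cabs_eq0 z : (cabs z == 0) = (z == 0).
Proof. by apply/eqP/eqP => [/ComplexField.Normc.eq0_normc|->] //; exact: cabs0. Qed.

Lemma cabs_real (x : R) : 0 <= x -> cabs x%:C%C = x.
Proof. by move=> x_ge0; rewrite /cabs /= expr0n /= addr0 sqrtr_sqr ger0_norm. Qed.

Lemma cabsM z1 z2 : cabs (z1 * z2) = cabs z1 * cabs z2.
Proof. exact: ComplexField.Normc.normcM. Qed.

Lemma cabs_natr n : cabs (n%:R : R[i]) = n%:R.
Proof. by rewrite -(rmorph_nat (real_complex R)) cabs_real ?ler0n. Qed.

Lemma cabs_sum_le (I : Type) (s : seq I) (F : I -> R[i]) :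
  cabs (\sum_(i <- s) F i) <= \sum_(i <- s) cabs (F i).
Proof.
elim/big_rec2: _ => [|i y1 y2 _ IH]; first by rewrite cabs0.
exact: le_trans (le_normcD _ _) (lerD _ IH).
Qed.

Lemma cabs_absfun (G : Type) (f : G -> R[i]) g : cabs (absfun f g) = cabs (f g).
Proof. exact/cabs_real/cabs_ge0. Qed.

Lemma finsupp_absfun (G : Type) (f : G -> R[i]) : finsupp (absfun f) = finsupp f.
Proof.
by congr finite_set; apply/seteqP; split => g /=; rewrite -!cabs_eq0 cabs_absfun.
Qed.

End ComplexModulus.

Section SquareSummable.
Variables (R : realType) (G : Type).
Implicit Types u v xi : G -> R[i].

Lemma l2sq_ge0 u : (0 <= l2sq u)%E.
Proof. by apply: esum_ge0 => g _; rewrite lee_fin sqr_ge0. Qed.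

Lemma le_l2sq u v : (forall g, cabs (u g) <= cabs (v g)) -> (l2sq u <= l2sq v)%E.
Proof.
move=> le_uv; apply: le_esum => g _.
by rewrite lee_fin lerXn2r ?nnegrE ?cabs_ge0.
Qed.

Lemma in_l2_le u v : (forall g, cabs (u g) <= cabs (v g)) -> in_l2 v -> in_l2 u.
Proof. by move=> /le_l2sq le_uv; apply: le_lt_trans. Qed.

(* [l2norm] is [0] on functions outside l^2 ([fine +oo = 0]), hence the
   hypothesis [in_l2 v]. *)
Lemma l2norm_le u v : (forall g, cabs (u g) <= cabs (v g)) -> in_l2 v ->
  l2norm u <= l2norm v.
Proof.
move=> le_uv v_l2; apply/ler_wsqrtr/fine_le/le_l2sq => //;
  rewrite ge0_fin_numE ?l2sq_ge0 //; exact: in_l2_le v_l2.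
Qed.

Lemma l2sq_absfun xi : l2sq (absfun xi) = l2sq xi.
Proof. by apply: eq_esum => g _; rewrite cabs_absfun. Qed.

Lemma in_l2_0 : in_l2 (fun _ : G => 0 : R[i]).
Proof. by rewrite /in_l2 /l2sq esum1 ?ltry // => g _; rewrite cabs0 expr0n. Qed.

Lemma in_l2_add u v : in_l2 u -> in_l2 v -> in_l2 (fun g => u g + v g).
Proof.
move=> u_l2 v_l2.
apply: (@le_lt_trans _ _ ((l2sq u + l2sq u) + (l2sq v + l2sq v))%E); last first.
  by rewrite !lte_add_pinfty.
rewrite /l2sq -!esumD // => *; rewrite ?adde_ge0 ?lee_fin ?sqr_ge0 //.
apply: le_esum => g _; rewrite -!EFinD lee_fin.
apply: (@le_trans _ _ ((cabs (u g) + cabs (v g)) ^+ 2)).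
  by rewrite lerXn2r ?nnegrE ?addr_ge0 ?cabs_ge0 //; exact: le_normcD.
have := sqr_ge0 (cabs (u g) - cabs (v g)); rewrite sqrrB sqrrD; lra.
Qed.

Lemma in_l2_natmul n xi : in_l2 xi -> in_l2 (fun g => n%:R * xi g).
Proof.
move=> xi_l2; elim: n => [|n IH].
  by apply: in_l2_le in_l2_0 => g; rewrite mul0r.
by apply: in_l2_le (in_l2_add xi_l2 IH) => g; rewrite mulrSr mulrDl mul1r addrC.
Qed.

Lemma in_l2_scale (a : R[i]) xi : in_l2 xi -> in_l2 (fun g => a * xi g).
Proof.
move=> /(in_l2_natmul (Num.Def.archi_bound (cabs a))); apply: in_l2_le => g.
rewrite !cabsM cabs_natr ler_wpM2r ?cabs_ge0 //.
exact/ltW/archi_boundP/cabs_ge0.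
Qed.

End SquareSummable.

Section TwistedConvolution.
Variables (R : realType) (G : Type) (mul : G -> G -> G) (inv : G -> G) (e : G).
Hypothesis HG : is_group mul inv e.
Implicit Types (f xi : G -> R[i]) (sigma : G -> G -> R[i]).

Lemma mulKg g h : mul (inv g) (mul g h) = h.
Proof. by case: HG => mulA mul1g _ mulVg _; rewrite mulA mulVg mul1g. Qed.

Lemma mulKVg g h : mul g (mul (inv g) h) = h.
Proof. by case: HG => mulA mul1g _ _ mulgV; rewrite mulA mulgV mul1g. Qed.

Lemma l2sq_translate g xi : l2sq (fun h => xi (mul (inv g) h)) = l2sq xi.
Proof.
rewrite /l2sq (@reindex_esum _ {classic G} {classic G} setT setT (mul g)).
  by apply: eq_esum => h _; rewrite mulKg.
by rewrite setTT_bijective; exists (mul (inv g)) => h; [exact: mulKg|exact: mulKVg].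
Qed.

Lemma finsupp_seq f : finsupp f ->
  exists2 s : seq {classic G}, uniq s & forall g, g \notin s -> f g = 0.
Proof.
move=> /(@finite_seqP {classic G}) [s supp_f].
exists (undup s) => [|g]; first exact: undup_uniq.
rewrite mem_undup; apply: contraNeq => fg_neq0.
by have : [set` s] g by rewrite -supp_f.
Qed.

Lemma pi_sigma_seqE (s : seq {classic G}) f :
    uniq s -> (forall g, g \notin s -> f g = 0) -> forall sigma xi,
  pi_sigma mul inv sigma f xi = fun h =>
    \sum_(g <- s) f g * sigma g (mul (inv g) h) * xi (mul (inv g) h).
Proof.
move=> s_uniq f_supp sigma xi; apply/funext => h.
rewrite /pi_sigma (fsbigE _ _ s_uniq) => [||g _ /f_supp ->]; rewrite ?mul0r //.
by apply: eq_bigl => g; rewrite in_setT.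
Qed.

Lemma in_l2_pi_trivial f xi : finsupp f -> in_l2 xi ->
  in_l2 (pi_sigma mul inv (fun _ _ => 1) f xi).
Proof.
move=> /finsupp_seq[s s_uniq f_supp] xi_l2; rewrite (pi_sigma_seqE s_uniq f_supp).
elim: s {s_uniq f_supp} => [|g s IH].
  by apply: in_l2_le (in_l2_0 _ _) => h; rewrite big_nil.
have xi_g_l2 : in_l2 (fun h => xi (mul (inv g) h)) by rewrite /in_l2 l2sq_translate.
apply: in_l2_le (in_l2_add (in_l2_scale (f g) xi_g_l2) IH) => h.
by rewrite big_cons mulr1.
Qed.

Lemma cabs_pi_sigma_le sigma f xi h :
  (forall g k, cabs (sigma g k) = 1) -> finsupp f ->
  cabs (pi_sigma mul inv sigma f xi h) <=
    cabs (pi_sigma mul inv (fun _ _ => 1) (absfun f) (absfun xi) h).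
Proof.
move=> sigma_unit /finsupp_seq[s s_uniq f_supp].
have absf_supp g : g \notin s -> absfun f g = 0.
  by move/f_supp; rewrite /absfun => ->; rewrite cabs0.
rewrite (pi_sigma_seqE s_uniq f_supp) (pi_sigma_seqE s_uniq absf_supp).
set t := fun g => cabs (f g) * cabs (xi (mul (inv g) h)).
have -> : \sum_(g <- s) absfun f g * 1 * absfun xi (mul (inv g) h) =
           (\sum_(g <- s) t g)%:C%C.
  by rewrite rmorph_sum; apply: eq_bigr => g _; rewrite mulr1 rmorphM.
rewrite cabs_real ?sumr_ge0 // => [|g _]; last by rewrite mulr_ge0 ?cabs_ge0.
apply: le_trans (cabs_sum_le _ _) _; apply: ler_sum => g _.
by rewrite !cabsM sigma_unit mulr1.
Qed.

End TwistedConvolution.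

Theorem proposition3p3 (R : realType) (G : Type) (mul : G -> G -> G) (inv : G -> G) (e : G)
    (HG : is_group mul inv e)
    (L : set (G -> R[i])) (nrm : (G -> R[i]) -> R)
    (HL : l2_subspace_containing_K L) (Hnrm : is_norm_on L nrm)
    (Habs : forall f : G -> R[i], finsupp f -> nrm (absfun f) = nrm f)
    (Htriv : decay_property mul inv (fun _ _ => 1) L nrm) :
  forall sigma : G -> G -> R[i], normalized_2cocycle mul e sigma ->
    decay_property mul inv sigma L nrm.
Proof.
move=> sigma [sigma_unit _ _ _]; case: Htriv => decay [C bound_triv].
split => //; exists C => f f_fin xi xi_l2.
have absf_fin : finsupp (absfun f) by rewrite finsupp_absfun.
have absxi_l2 : in_l2 (absfun xi) by rewrite /in_l2 l2sq_absfun.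
have := bound_triv _ absf_fin _ absxi_l2.
rewrite Habs // {2}/l2norm l2sq_absfun -/(l2norm xi); apply: le_trans.
apply: l2norm_le (in_l2_pi_trivial HG absf_fin absxi_l2) => h.
exact: cabs_pi_sigma_le.
Qed.
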